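(* $\chi_i(C_4\Box C_5)\leq 6$ and $\chi_i(C_7\Box C_7)\leq 6$.
   Context: For a graph $G$, an incidence is a pair $(v,e)$ with $v\in V(G)$, $e\in E(G)$ and $v$ incident with $e$. Two incidences $(v,e)$ and $(w,f)$ are adjacent if $v=w$, or $e=f$, or the edge $vw$ equals $e$ or $f$. An incidence $k$-coloring of $G$ is a map from the set of incidences of $G$ to a set of $k$ colors such that adjacent incidences receive distinct colors; the incidence chromatic number $\chi_i(G)$ is the least such $k$. $C_n$ denotes the cycle on $n$ vertices and $\Box$ the Cartesian product of graphs: $G\Box H$ has vertex set $V(G)\times V(H)$, with $(u_1,v_1)$ adjacent to $(u_2,v_2)$ iff either $u_1=u_2$ and $v_1v_2\in E(H)$, or $v_1=v_2$ and $u_1u_2\in E(G)$. *)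

From mathcomp Require Import all_boot all_order.
Set Implicit Arguments. Unset Strict Implicit. Unset Printing Implicit Defensive.

(* A simple graph is a symmetric irreflexive relation on a finite vertex type. *)

Definition cycle_rel (n : nat) : rel 'I_n :=
  fun i j => (val j == (val i).+1 %% n) || (val i == (val j).+1 %% n).

Arguments cycle_rel n : clear implicits.

Definition cart_rel (T1 T2 : finType) (e1 : rel T1) (e2 : rel T2) : rel (T1 * T2) :=
  fun x y => ((x.1 == y.1) && e2 x.2 y.2) || ((x.2 == y.2) && e1 x.1 y.1).

Section Incidence.
Variables (T : finType) (e : rel T).

Definition is_edge (E : {set T}) : bool :=
  [exists x, exists y, e x y && (E == [set x; y])].

Definition is_incidence (p : T * {set T}) : bool := is_edge p.2 && (p.1 \in p.2).

Definition inc_adj (p q : T * {set T}) : bool :=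
  [|| p.1 == q.1, p.2 == q.2, [set p.1; q.1] == p.2 | [set p.1; q.1] == q.2].

Definition incidence_coloring (k : nat) (c : {ffun T * {set T} -> 'I_k}) : bool :=
  [forall p, forall q,
     [&& is_incidence p, is_incidence q, p != q & inc_adj p q] ==> (c p != c q)].

Definition inc_colorable (k : nat) : bool :=
  [exists c : {ffun T * {set T} -> 'I_k}, incidence_coloring c].

(* Incidence chromatic number: least k admitting an incidence k-coloring
   (k = #|T * {set T}| always works, so the bound of the range is harmless). *)
Definition inc_chromatic : nat :=
  \big[minn/#|{: T * {set T}}|]_(k < #|{: T * {set T}}|.+1 | inc_colorable k) k.

End Incidence.

From mathcomp Require Import all_boot all_order zmodp.
Set Implicit Arguments. Unset Strict Implicit. Unset Printing Implicit Defensive.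

(* An incidence (v, vw) is the same thing as the arc v -> w, and two distinct
   incidences are adjacent exactly when the arcs share their tail, or the head
   of one is the tail of the other.  So it suffices to colour arcs with 6
   colours such that the arcs leaving a vertex get distinct colours and each
   arc v -> w differs from every arc w -> u.  Such arc colourings of the tori
   C_4 [] C_5 and C_7 [] C_7 are given explicitly and checked by computation. *)

Section ArcColoring.
Variables (T : finType) (e : rel T).

Definition arc_coloring k (h : T -> T -> 'I_k) : Prop :=
  (forall v w u, e v w -> e v u -> w != u -> h v w != h v u) /\
  (forall v w u, e v w -> e w u -> h v w != h w u).

Definition arc_coloringb (s : seq T) k (h : T -> T -> 'I_k) : bool :=
  all (fun v => all (fun w => all (fun u =>
    (e v w ==> e v u ==> (w != u) ==> (h v w != h v u)) &&
    (e v w ==> e w u ==> (h v w != h w u))) s) s) s.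

Lemma arc_coloringP (s : seq T) k (h : T -> T -> 'I_k) :
  (forall x, x \in s) -> arc_coloringb s h -> arc_coloring h.
Proof.
move=> s_full /allP hs.
have huv v w u := allP (allP (hs v (s_full v)) w (s_full w)) u (s_full u).
split=> v w u evw.
- by move=> evu wu; have /andP[/implyP/(_ evw)/implyP/(_ evu)/implyP/(_ wu) ->] := huv v w u.
- by move=> ewu; have /andP[_ /implyP/(_ evw)/implyP/(_ ewu) ->] := huv v w u.
Qed.

Hypothesis e_sym : symmetric e.
Hypothesis e_irr : irreflexive e.

Definition other_end (p : T * {set T}) : T := odflt p.1 [pick x in p.2 :\ p.1].

Lemma incidenceP v E : is_incidence e (v, E) ->
  e v (other_end (v, E)) /\ E = [set v; other_end (v, E)].
Proof.
rewrite /is_incidence /= => /andP[/existsP[x /existsP[y /andP[exy /eqP defE]]] vE].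
have [w [evw {x y exy defE vE}->]] : exists w, e v w /\ E = [set v; w].
  move: vE; rewrite defE => /set2P[->|->]; first by exists y.
  by exists x; rewrite e_sym setUC.
have vw : v != w by apply: contraTneq evw => ->; rewrite e_irr.
rewrite /other_end /=.
have -> : [set v; w] :\ v = [set w].
  by apply/setP=> z; rewrite !inE; case: (z =P v) => [->|]; rewrite ?(negbTE vw).
case: pickP => [z /set1P -> //|/(_ w)].
by rewrite inE eqxx.
Qed.

Lemma arc_coloring_incidence_coloring k (h : T -> T -> 'I_k) :
  arc_coloring h -> incidence_coloring e [ffun p => h p.1 (other_end p)].
Proof.
case=> h_tail h_head; apply/forallP=> -[v E]; apply/forallP=> -[v' E'].
apply/implyP=> /and4P[/incidenceP[evw defE] /incidenceP[evw' defE']].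
rewrite /inc_adj !ffunE /=.
set w := other_end (v, E) in evw defE *; set w' := other_end (v', E') in evw' defE' *.
clearbody w w'; subst E E' => neq adj.
have same_tail : v = v' -> h v w != h v' w'.
  move=> vv'; rewrite -vv' in evw' neq *; apply: h_tail => //.
  by apply: contra_neq neq => ->.
have : (v == v') || (v' \in [set v; w]) || (v \in [set v'; w']).
  case/or4P: adj => [-> //|/eqP EE|/eqP EE|/eqP EE].
  - by rewrite EE set21 orbT.
  - by rewrite -EE set22 orbT.
  - by rewrite -EE set21 !orbT.
case/orP=> [/orP[/eqP|/set2P[/esym|v'w]]|/set2P[|vw']]; try exact: same_tail.
- by rewrite -v'w; apply: h_head; rewrite // v'w.
- by rewrite eq_sym vw'; apply: h_head; rewrite // -vw'.
Qed.

End ArcColoring.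

Lemma bigmin_leq (I : eqType) (r : seq I) (P : pred I) (F : I -> nat) d j :
  j \in r -> P j -> \big[minn/d]_(i <- r | P i) F i <= F j.
Proof.
elim: r => //= a r IHr; rewrite big_cons in_cons => /orP[/eqP<-|jr] Pj.
  by rewrite Pj geq_minl.
by case: ifP => _; rewrite ?geq_min IHr ?orbT.
Qed.

Lemma inc_chromatic_le (T : finType) (e : rel T) k :
  k <= #|{: T * {set T}}| -> inc_colorable e k -> inc_chromatic e <= k.
Proof.
move=> k_le colk.
exact: (bigmin_leq _ _ (j := Ordinal (k_le : k < _.+1)) (mem_index_enum _)).
Qed.

Lemma inc_chromatic_le_arc_coloring (T : finType) (e : rel T) k (h : T -> T -> 'I_k) :
  symmetric e -> irreflexive e -> k <= #|{: T * {set T}}| -> arc_coloring e h ->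
  inc_chromatic e <= k.
Proof.
move=> e_sym e_irr k_le hcol; apply: inc_chromatic_le => //.
by apply/existsP; eexists; apply: arc_coloring_incidence_coloring hcol.
Qed.

Lemma cycle_rel_sym n : symmetric (cycle_rel n).
Proof. by move=> i j; rewrite /cycle_rel orbC. Qed.

Lemma cycle_rel_irr n : 1 < n -> irreflexive (cycle_rel n).
Proof.
move=> n_gt1 i; rewrite /cycle_rel orbb.
have := ltn_ord i; rewrite leq_eqVlt => /orP[/eqP i1_eq_n|i1_lt_n].
  by rewrite i1_eq_n modnn; apply/negbTE; rewrite -lt0n -ltnS i1_eq_n.
by rewrite modn_small // ltn_eqF.
Qed.

Lemma cart_rel_sym (T1 T2 : finType) (e1 : rel T1) (e2 : rel T2) :
  symmetric e1 -> symmetric e2 -> symmetric (cart_rel e1 e2).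
Proof.
by move=> e1_sym e2_sym x y; rewrite /cart_rel e1_sym e2_sym (eq_sym x.1) (eq_sym x.2).
Qed.

Lemma cart_rel_irr (T1 T2 : finType) (e1 : rel T1) (e2 : rel T2) :
  irreflexive e1 -> irreflexive e2 -> irreflexive (cart_rel e1 e2).
Proof. by move=> e1_irr e2_irr x; rewrite /cart_rel e1_irr e2_irr !andbF. Qed.

Definition torus n m := cart_rel (cycle_rel n) (cycle_rel m).
Arguments torus n m : clear implicits.

(* [inZp] rather than [ord_enum], whose [insub] does not reduce under [vm_compute]. *)
Definition torus_enum n m : seq ('I_n.+1 * 'I_m.+1) :=
  [seq (inZp i, inZp j) | i <- iota 0 n.+1, j <- iota 0 m.+1].

Lemma mem_torus_enum n m (x : 'I_n.+1 * 'I_m.+1) : x \in torus_enum n m.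
Proof.
by case: x => i j; rewrite -(valZpK i) -(valZpK j); apply: allpairs_f; rewrite mem_iota ltn_ord.
Qed.

Definition torus_dir n m (v w : 'I_n * 'I_m) : nat :=
  if val w.1 == (val v.1).+1 %% n then 0
  else if val v.1 == (val w.1).+1 %% n then 1
  else if val w.2 == (val v.2).+1 %% m then 2 else 3.

(* Entry [tbl]_i_j lists the colours of the arcs leaving (i, j) towards
   (i+1, j), (i-1, j), (i, j+1) and (i, j-1), in this order. *)
Definition table_coloring n m (tbl : seq (seq (seq nat))) (v w : 'I_n * 'I_m) : 'I_6 :=
  inZp (nth 0 (nth [::] (nth [::] tbl v.1) v.2) (torus_dir v w)).

Lemma torus_inc_chromatic_le6 n m (tbl : seq (seq (seq nat))) :
  0 < n -> 0 < m -> 6 <= n.+1 * m.+1 ->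
  arc_coloringb (torus n.+1 m.+1) (torus_enum n m) (table_coloring tbl) ->
  inc_chromatic (torus n.+1 m.+1) <= 6.
Proof.
move=> n_gt0 m_gt0 nm_ge6 /(arc_coloringP (@mem_torus_enum n m)) tbl_col.
apply: inc_chromatic_le_arc_coloring tbl_col.
- by apply: cart_rel_sym; apply: cycle_rel_sym.
- by apply: cart_rel_irr; apply: cycle_rel_irr.
- rewrite !card_prod !card_ord; apply: leq_trans nm_ge6 (leq_pmulr _ _).
  by apply/card_gt0P; exists set0.
Qed.

Definition torus4_5_table : seq (seq (seq nat)) := [::
  [:: [:: 0; 1; 2; 3]; [:: 0; 1; 3; 4]; [:: 1; 0; 4; 2]; [:: 0; 1; 5; 3]; [:: 1; 0; 4; 2]];
  [:: [:: 2; 4; 1; 5]; [:: 4; 2; 5; 3]; [:: 2; 3; 4; 0]; [:: 3; 2; 5; 1]; [:: 2; 3; 0; 4]];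
  [:: [:: 1; 0; 3; 4]; [:: 1; 0; 2; 5]; [:: 0; 1; 4; 3]; [:: 1; 0; 2; 5]; [:: 0; 1; 5; 3]];
  [:: [:: 4; 2; 3; 0]; [:: 2; 4; 0; 5]; [:: 3; 2; 4; 1]; [:: 2; 3; 0; 5]; [:: 3; 2; 1; 4]]].

Definition torus7_7_table : seq (seq (seq nat)) := [::
  [:: [:: 0; 1; 2; 3]; [:: 0; 1; 3; 4]; [:: 1; 0; 4; 2]; [:: 0; 1; 5; 3]; [:: 1; 0; 4; 2]; [:: 0; 1; 5; 3]; [:: 1; 0; 4; 2]];
  [:: [:: 2; 4; 1; 5]; [:: 4; 2; 5; 3]; [:: 2; 3; 4; 0]; [:: 3; 2; 5; 1]; [:: 2; 3; 4; 0]; [:: 3; 2; 5; 1]; [:: 2; 3; 0; 4]];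
  [:: [:: 1; 0; 5; 3]; [:: 1; 0; 3; 2]; [:: 0; 1; 5; 4]; [:: 1; 0; 4; 2]; [:: 0; 1; 3; 5]; [:: 1; 0; 2; 4]; [:: 0; 1; 4; 5]];
  [:: [:: 3; 2; 0; 4]; [:: 2; 4; 3; 5]; [:: 4; 2; 5; 1]; [:: 2; 3; 4; 0]; [:: 3; 2; 1; 5]; [:: 2; 3; 4; 0]; [:: 3; 2; 1; 5]];
  [:: [:: 0; 1; 2; 4]; [:: 4; 0; 5; 3]; [:: 3; 0; 2; 1]; [:: 0; 1; 3; 4]; [:: 1; 0; 2; 5]; [:: 0; 1; 3; 4]; [:: 1; 0; 5; 2]];
  [:: [:: 1; 3; 2; 5]; [:: 5; 1; 3; 0]; [:: 1; 5; 0; 4]; [:: 4; 5; 1; 2]; [:: 5; 4; 0; 3]; [:: 4; 2; 5; 1]; [:: 2; 3; 4; 0]];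
  [:: [:: 4; 0; 5; 2]; [:: 2; 4; 0; 3]; [:: 3; 2; 4; 5]; [:: 2; 3; 5; 0]; [:: 3; 2; 1; 4]; [:: 2; 3; 0; 5]; [:: 3; 5; 1; 4]]].

Theorem lemma4 :
  inc_chromatic (cart_rel (cycle_rel 4) (cycle_rel 5)) <= 6 /\
  inc_chromatic (cart_rel (cycle_rel 7) (cycle_rel 7)) <= 6.
Proof.
split.
- by apply: (@torus_inc_chromatic_le6 3 4 torus4_5_table); vm_compute.
- by apply: (@torus_inc_chromatic_le6 6 6 torus7_7_table); vm_compute.
Qed.
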